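(* Let $N\ge2$, $\gamma\in(0,1)$, and let $\{(Q_i,\mathcal D_i)\}_{i=1}^M$ be an ID code with deterministic decoders for $\mathrm{NL}_{[N]}$ with error probabilities $\lambda_{i\to j}$ ($i\ne j$) and $\lambda_{i\not\to i}$. Then there exist nonempty sets $\mathcal U_i\subseteq[N]$, $i=1,\dots,M$, such that the ID code $\{(\mathcal U_i,\mathcal D_i)\}_{i=1}^M$ (message $i$ encoded uniformly on $\mathcal U_i$) has error probabilities $\tilde\lambda_{i\to j}\le\lambda_{i\to j}\cdot\frac{(1+2\gamma)N^{\gamma}}{\gamma(1-N^{-\gamma})}$ for all $i\ne j$ and $\tilde\lambda_{i\not\to i}\le\lambda_{i\not\to i}\cdot\frac{(1+2\gamma)N^{\gamma}}{\gamma(1-N^{-\gamma})}$ for all $i$.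
   Context: $\mathrm{NL}_{[N]}$ is the noiseless channel with input and output alphabet $[N]=\{1,\dots,N\}$. An ID code with deterministic decoders for $\mathrm{NL}_{[N]}$ is a family $\{(Q_i,\mathcal D_i)\}_{i=1}^M$ with $Q_i$ a probability distribution on $[N]$ and $\mathcal D_i\subseteq[N]$; its error probabilities are $\lambda_{i\to j}=Q_i(\mathcal D_j)$ for $i\ne j$ and $\lambda_{i\not\to i}=Q_i([N]\setminus\mathcal D_i)$. For nonempty $\mathcal U_i\subseteq[N]$, the code $\{(\mathcal U_i,\mathcal D_i)\}$ denotes the code in which $Q_i$ is the uniform distribution on $\mathcal U_i$. *)

From mathcomp Require Import all_boot all_order all_algebra.
From mathcomp Require Import reals exp.
Set Implicit Arguments. Unset Strict Implicit. Unset Printing Implicit Defensive.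
Import Order.TTheory GRing.Theory Num.Theory.
Local Open Scope ring_scope.

(* The channel NL_[N] has alphabet [N] = {1..N}, represented as 'I_N. *)

Definition is_distr (R : realType) (T : finType) (Q : T -> R) : Prop :=
  (forall x, 0 <= Q x) /\ \sum_(x : T) Q x = 1.

Definition probS (R : realType) (T : finType) (Q : T -> R) (A : {set T}) : R :=
  \sum_(x in A) Q x.

Definition unif (R : realType) (T : finType) (U : {set T}) : T -> R :=
  fun x => if x \in U then (#|U|%:R)^-1 else 0.

Definition err_cross (R : realType) (N M : nat) (Q : 'I_M -> 'I_N -> R)
  (D : 'I_M -> {set 'I_N}) (i j : 'I_M) : R := probS (Q i) (D j).
Definition err_miss (R : realType) (N M : nat) (Q : 'I_M -> 'I_N -> R)
  (D : 'I_M -> {set 'I_N}) (i : 'I_M) : R := probS (Q i) (~: D i).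

Definition blowup (R : realType) (N : nat) (g : R) : R :=
  (1 + 2 * g) * (N%:R `^ g) / (g * (1 - N%:R `^ (- g))).

(* Sort the values of Q decreasingly. If every point x had
   Q x * #{y | Q x <= Q y} < 1/C, the k-th largest value would be below 1/(C k),
   so the total mass would be below H_N / C < 1. Hence some x satisfies
   Q x * #{y | Q x <= Q y} >= 1/C, and the uniform distribution on the superlevel
   set {y | Q x <= Q y} is pointwise at most C Q. The bound H_N <= 1 + ln N
   puts C = blowup N g above H_N. *)

From mathcomp Require Import all_boot all_order all_algebra.
From mathcomp Require Import reals exp.
From mathcomp Require Import lra.
Import Order.TTheory GRing.Theory Num.Theory.
Set Implicit Arguments. Unset Strict Implicit.
Local Open Scope ring_scope.

Definition harmonic (R : realType) (n : nat) : R := \sum_(i < n) (i.+1%:R)^-1.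

Lemma harmonicS (R : realType) n : harmonic R n.+1 = harmonic R n + (n.+1%:R)^-1.
Proof. by rewrite /harmonic big_ord_recr. Qed.

Lemma harmonic_ge0 (R : realType) n : 0 <= harmonic R n.
Proof. by apply: sumr_ge0 => i _; rewrite invr_ge0. Qed.

Lemma harmonic_le_1Dln (R : realType) n : (0 < n)%N -> harmonic R n <= 1 + ln n%:R.
Proof.
elim: n => [//|[|n] IH] _.
  by rewrite harmonicS /harmonic big_ord0 ln1 add0r addr0 invr1.
have n2_gt1 : (1 : R) < n.+2%:R by rewrite ltr1n.
have n2_gt0 : (0 : R) < n.+2%:R by rewrite ltr0n.
set c : R := (n.+2%:R)^-1.
have c_lt1 : c < 1 by rewrite invf_lt1.
(* the increment c = 1/(n+2) is at most ln (n+2) - ln (n+1) = - ln (1 - c) *)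
have ln_split : ln (n.+1%:R : R) = ln (n.+2%:R) + ln (1 - c).
  rewrite -lnM ?posrE ?subr_gt0 //; congr ln.
  by rewrite mulrBr mulr1 divff ?gt_eqF // -[n.+2]addn1 natrD addrK.
have ln_le : ln (1 - c) <= - c by apply: le_ln1Dx; rewrite ltrN2.
rewrite harmonicS -/c; move: (IH isT); rewrite ln_split; lra.
Qed.

Section SuperlevelSets.

Variables (R : realType) (T : finType) (Q : T -> R).

Definition superlevel (S : {set T}) (x : T) : {set T} := [set y in S | Q x <= Q y].

Hypothesis Q_ge0 : forall x, 0 <= Q x.

Lemma sum_le_harmonic (c : R) (S : {set T}) :
  (forall x, x \in S -> Q x * #|superlevel S x|%:R <= c) ->
  \sum_(x in S) Q x <= c * harmonic R #|S|.
Proof.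
move cardS: #|S| => n; elim: n S cardS => [|n IH] S cardS bound.
  move/eqP: cardS; rewrite cards_eq0 => /eqP ->.
  by rewrite big_set0 /harmonic big_ord0 mulr0.
have [x0 Sx0] : exists x0, x0 \in S by apply/set0Pn; rewrite -card_gt0 cardS.
have [m Sm m_min] := arg_minP (P := fun x => x \in S) Q Sx0.
have level_m : superlevel S m = S.
  by apply/setP => y; rewrite inE andb_idr // => /m_min.
have head : Q m <= c * (n.+1%:R)^-1.
  by rewrite ler_pdivlMr ?ltr0n // -cardS -level_m bound.
have cardSm : #|S :\ m| = n by move: cardS; rewrite (cardsD1 m) Sm add1n => -[].
rewrite (big_setD1 m) //= harmonicS mulrDr addrC lerD // IH // => x.
rewrite inE => /andP [_ Sx]; apply: le_trans (bound x Sx).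
rewrite ler_wpM2l // ler_nat; apply/subset_leq_card/subsetP => y.
by rewrite !inE => /andP [/andP [_ ->] ->].
Qed.

Lemma unif_superlevel_le (C : R) :
  \sum_x Q x = 1 -> harmonic R #|T| < C ->
  exists2 U : {set T}, U != set0 & forall x, unif R U x <= Q x * C.
Proof.
move=> Q1 HC; have C_gt0 : 0 < C by apply: le_lt_trans HC; apply: harmonic_ge0.
have [/existsP [x0 big_x0] | /existsPn small] :=
  boolP [exists x, C^-1 <= Q x * #|superlevel setT x|%:R]; last first.
  have : \sum_(x in [set: T]) Q x <= C^-1 * harmonic R #|[set: T]|.
    by apply: sum_le_harmonic => x _; rewrite ltW // ltNge small.
  rewrite cardsT (eq_bigl predT) ?Q1 => [|x]; last by rewrite inE.
  by rewrite mulrC ler_pdivlMr // mul1r leNgt HC.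
set U := superlevel setT x0 in big_x0.
have Ux0 : x0 \in U by rewrite /U !inE lexx.
have U_gt0 : (0 : R) < #|U|%:R by rewrite ltr0n; apply/card_gt0P; exists x0.
exists U; first by apply/set0Pn; exists x0.
move=> x; rewrite /unif; case: ifP => Ux; last by rewrite mulr_ge0 // ltW.
have Qx : Q x0 <= Q x by move: Ux; rewrite /U !inE.
apply: (@le_trans _ _ (Q x0 * C)); last by rewrite ler_pM2r.
by move: big_x0; rewrite -[C^-1]mul1r -[#|U|%:R^-1]mul1r !ler_pdivrMr // mulrAC.
Qed.

End SuperlevelSets.

Lemma probS_le_scale (R : realType) (T : finType) (P Q : T -> R) (C : R) (A : {set T}) :
  (forall x, P x <= Q x * C) -> probS P A <= probS Q A * C.
Proof. by move=> PQ; rewrite /probS big_distrl ler_sum. Qed.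

Lemma harmonic_lt_blowup (R : realType) (N : nat) (g : R) :
  (2 <= N)%N -> 0 < g < 1 -> harmonic R N < blowup N g.
Proof.
move=> N2 /andP [g_gt0 g_lt1].
have N_gt1 : (1 : R) < N%:R by rewrite ltr1n.
have L_gt0 : 0 < ln (N%:R : R) by apply: ln_gt0.
have HL := harmonic_le_1Dln R (ltnW N2).
rewrite /blowup powRN.
set L := ln _ in L_gt0 HL; set P := N%:R `^ g.
have P_ge : 1 + g * L <= P by rewrite /P /powR gt_eqF ?(lt_trans ltr01) // expR_ge1Dx.
have P_gt1 : 1 < P by apply: lt_le_trans P_ge; rewrite ltrDl mulr_gt0.
have q_gt0 : 0 < P^-1 by rewrite invr_gt0 (lt_trans ltr01).
have q_lt1 : P^-1 < 1 by rewrite invf_lt1 // (lt_trans ltr01).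
set q := P^-1 in q_gt0 q_lt1 *.
(* H_N g (1 - q) <= (1 + L) g = g + g L <= g + P < (1 + 2 g) P *)
have d_gt0 : 0 < g * (1 - q) by rewrite mulr_gt0 // subr_gt0.
rewrite ltr_pdivlMr //.
have s1 : harmonic R N * (g * (1 - q)) <= (1 + L) * (g * (1 - q)).
  by rewrite ler_pM2r.
have s2 : (1 + L) * (g * (1 - q)) <= g + g * L.
  apply: (@le_trans _ _ ((1 + L) * g)).
    by rewrite ler_pM2l ?addr_gt0 // ger_pMr // lerBlDr lerDl ltW.
  by rewrite mulrDl mul1r [L * g]mulrC.
have s3 : P <= (1 + 2 * g) * P by rewrite ler_peMl; lra.
move: s1 s2 s3 P_ge; set X := harmonic R N * _; set Y := (1 + L) * _.
set W := g * L; lra.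
Qed.

Unset Implicit Arguments.
Set Strict Implicit.

Theorem lemma3 (R : realType) (N M : nat) (g : R)
  (Q : 'I_M -> 'I_N -> R) (D : 'I_M -> {set 'I_N}) :
  (2 <= N)%N -> 0 < g < 1 ->
  (forall i, is_distr (Q i)) ->
  exists U : 'I_M -> {set 'I_N},
    (forall i, U i != set0) /\
    (forall i j, i != j ->
       err_cross (fun k => unif R (U k)) D i j <= err_cross Q D i j * blowup N g) /\
    (forall i,
       err_miss (fun k => unif R (U k)) D i <= err_miss Q D i * blowup N g).
Proof.
move=> N2 g01 Q_distr.
have HC : harmonic R #|'I_N| < blowup N g by rewrite card_ord harmonic_lt_blowup.
have /fin_all_exists [U HU] : forall i, exists U : {set 'I_N},
    U != set0 /\ forall x, unif R U x <= Q i x * blowup N g.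
  move=> i; have [Q_ge0 Q1] := Q_distr i.
  by have [U U0 U_le] := unif_superlevel_le Q_ge0 Q1 HC; exists U.
have U_le i x : unif R (U i) x <= Q i x * blowup N g by case: (HU i).
exists U; split; first by move=> i; case: (HU i).
by split=> [i j _|i]; exact: probS_le_scale (U_le i).
Qed.
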